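(* Let $n,d$ be positive integers and let $k$ be a positive integer. Then $v_A(n,d,k)\ge v_M(n,d,k)$, where $v_A$ is the value of Alpern's caching game and $v_M$ is the value of the multiple-treasures-per-door search game.
   Context: Multiple-treasures-per-door search game with parameters $(n,d,k)$: the hider places $d$ treasures behind $n$ doors, several treasures allowed behind the same door. In each round the searcher selects at most $k$ doors; if none of them hides a treasure not yet found, she loses; otherwise the hider reveals one not-yet-found treasure behind one of the selected doors (hider's choice). The searcher wins if she finds all $d$ treasures with a total of $d$ guesses. Players may randomize and the searcher may adapt to previous answers; $v_M(n,d,k)$ is the probability the searcher wins under optimal play by both. Alpern's caching game with parameters $(n,d,k)$: there are $n$ places. The hider digs holes at the places with nonnegative depths $h_1,\dots,h_n$ of total depth $\sum_i h_i\le 1$, and hides the $d$ treasures in these holes, each treasure at some place $i$ and some depth $t\in[0,h_i]$ (several treasures may be in the same hole). Afterwards the searcher digs adaptively: at each place she digs downward from the surface, and she may dig a total depth (summed over all places) of at most $k$; she finds a treasure at place $i$ and depth $t$ at the moment her digging at place $i$ reaches depth $t$, and she observes when she finds a treasure. She wins if she finds all $d$ treasures. Players may randomize; $v_A(n,d,k)$ is the probability the searcher wins under optimal play by both. *)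

From HB Require Import structures.
From mathcomp Require Import all_boot all_order all_algebra.
From mathcomp Require Import boolp classical_sets reals.
Set Implicit Arguments. Unset Strict Implicit. Unset Printing Implicit Defensive.
Import Order.TTheory GRing.Theory Num.Theory.
Local Open Scope ring_scope.
Local Open Scope classical_set_scope.

Section Mixed.
Variable (R : realType).
(* A (finitely supported) mixed strategy over pure strategies of type T:
   a list of (probability weight, pure strategy); all weights >= 0, all
   strategies admissible, total weight 1. *)
Definition mix_ok (T : Type) (ok : T -> Prop) (mu : seq (R * T)) : Prop :=
  foldr (fun p P => (0 <= p.1 /\ ok p.2) /\ P) True mu /\
  \sum_(p <- mu) p.1 = 1.
End Mixed.

Section MGame.
Variables (R : realType) (n d k : nat).

(* searcher pure strategy: history of revealed doors -> selected doors *)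
Definition mstrat := seq 'I_n -> {set 'I_n}.
Definition mstrat_ok (s : mstrat) : Prop := forall hist, (#|s hist| <= k)%N.

(* hider pure strategy: a placement (number of treasures behind each door)
   together with a response rule (which not-yet-found treasure to reveal) *)
Definition mplacement := 'I_n -> nat.
Definition mresp := seq 'I_n -> {set 'I_n} -> 'I_n.

(* door j still hides a not-yet-found treasure after history hist *)
Definition m_avail (c : mplacement) (hist : seq 'I_n) (j : 'I_n) : bool :=
  (count_mem j hist < c j)%N.

Definition mhider_ok (c : mplacement) (r : mresp) : Prop :=
  (\sum_(i < n) c i)%N = d /\
  forall hist (S : {set 'I_n}), [exists j in S, m_avail c hist j] ->
    (r hist S \in S) && m_avail c hist (r hist S).

(* history after m rounds, or None if the searcher has lost *)
Fixpoint mplay (s : mstrat) (c : mplacement) (r : mresp) (m : nat)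
  : option (seq 'I_n) :=
  match m with
  | 0 => Some [::]
  | m'.+1 =>
    match mplay s c r m' with
    | None => None
    | Some hist =>
      if [exists j in s hist, m_avail c hist j]
      then Some (rcons hist (r hist (s hist))) else None
    end
  end.

Definition mwins (s : mstrat) (c : mplacement) (r : mresp) : bool :=
  mplay s c r d != None.

Definition mwinprob (mu : seq (R * mstrat)) c r : R :=
  \sum_(p <- mu) p.1 * (mwins p.2 c r)%:R.

Definition v_M : R :=
  sup [set v : R | exists mu, mix_ok (@mstrat_ok) mu /\
        v = inf [set w : R | exists c r, mhider_ok c r /\ w = mwinprob mu c r]].
End MGame.

Section AGame.
Variables (R : realType) (n d k : nat).

(* treasure configuration: treasure j is at place (x j).1, depth (x j).2 *)
Definition acfg := ('I_d -> 'I_n * R)%type.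

(* hider pure strategy: hole depths h and treasure positions x *)
Definition ahider_ok (h : 'I_n -> R) (x : acfg) : Prop :=
  (forall i, 0 <= h i) /\ \sum_(i < n) h i <= 1 /\
  forall j, 0 <= (x j).2 <= h (x j).1.

(* searcher pure strategy: for each configuration x, a digging path
   s |-> (depth dug at each place when total depth s has been dug),
   s in [0,k]; it must be non-anticipative (depend only on what has been
   observed so far). *)
Definition astrat := acfg -> R -> 'I_n -> R.

Definition aobs (D : astrat) (x : acfg) (s : R) (i : 'I_n) : nat :=
  #|[set j : 'I_d | ((x j).1 == i) && ((x j).2 <= D x s i)]|.

Definition astrat_ok (D : astrat) : Prop :=
  (forall x i, D x 0 i = 0) /\
  (forall x i s s', 0 <= s -> s <= s' -> s' <= k%:R -> D x s i <= D x s' i) /\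
  (forall x s, 0 <= s <= k%:R -> \sum_(i < n) D x s i = s) /\
  (forall x y s, 0 <= s <= k%:R ->
     (forall s', 0 <= s' <= s -> aobs D x s' = aobs D y s') ->
     forall s', 0 <= s' <= s -> D x s' = D y s').

Definition awins (D : astrat) (x : acfg) : bool :=
  [forall j, (x j).2 <= D x k%:R (x j).1].

Definition awinprob (mu : seq (R * astrat)) x : R :=
  \sum_(p <- mu) p.1 * (awins p.2 x)%:R.

Definition v_A : R :=
  sup [set v : R | exists mu, mix_ok astrat_ok mu /\
        v = inf [set w : R | exists h x, ahider_ok h x /\ w = awinprob mu x]].
End AGame.

(* Each pure strategy s of the door game is simulated by a digging strategy.
   Given the treasures x, the door-game hider puts at each door as many
   treasures as x has at that place, and among the selected doors reveals a
   treasure lying closest below the deepest treasure found so far at its place.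
   In a round of s the digger digs all selected places simultaneously, each
   starting from the deepest treasure found there, so the first treasure she
   meets is exactly the revealed one.  Indexed by the level reached (the total
   length of the rounds), the dug depths are monotone and n-Lipschitz, hence can
   be reparametrised by the total depth dug; the result depends only on what has
   been observed.  If s wins, then after d rounds every treasure is found at a
   level equal to the sum over places of the deepest depth, which is at most 1,
   and a unit of level costs at most k of depth because at most k places are
   selected.  So every mixture of door strategies guarantees at least as much
   in the caching game. *)

From mathcomp Require Import all_boot all_order all_algebra.
From mathcomp Require Import boolp classical_sets reals.
From mathcomp Require Import ring lra.
Set Implicit Arguments. Unset Strict Implicit. Unset Printing Implicit Defensive.
Import Order.TTheory GRing.Theory Num.Theory.
Local Open Scope ring_scope.

Section RealFacts.
Variable R : realType.
Local Open Scope classical_set_scope.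

Lemma upper_lipschitz_ivt (F : R -> R) (K M t : R) : 0 <= K -> 0 <= M ->
  (forall a b, 0 <= a -> a <= b -> F b <= F a + K * (b - a)) ->
  F 0 <= t -> t <= F M -> exists2 l, 0 <= l & F l = t.
Proof.
move=> K0 M0 Flip F0t tFM.
pose E := [set l : R | 0 <= l /\ l <= M /\ F l <= t].
have E0 : E 0 by split; [exact: lexx | split].
have ubE : ubound E M by move=> y [_ []].
have supE : has_sup E by split; [exists 0 | exists M].
have le_sup : ubound E (sup E) by apply: ub_le_sup; exists M.
have l0 : 0 <= sup E by apply: le_sup.
have lM : sup E <= M by apply: ge_sup => //; exists 0.
have small u v : u < v -> 0 < (v - u) / (K + 1) /\ K * ((v - u) / (K + 1)) < v - u.
  rewrite -subr_gt0 => uv; have K1 : 0 < K + 1 by lra.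
  by rewrite divr_gt0 // mulrCA gtr_pMr ?ltr_pdivrMr //; lra.
exists (sup E) => //; apply/eqP; rewrite eq_le; apply/andP; split.
  rewrite leNgt; apply/negP => tF.
  have [eps0 Keps] := small _ _ tF.
  have [e Ee lt_e] := sup_adherent eps0 supE; have [e0 [_ Fe]] := Ee.
  have := Flip e (sup E) e0 (le_sup _ Ee).
  have : K * (sup E - e) <= K * ((F (sup E) - t) / (K + 1)) by apply: ler_wpM2l => //; lra.
  lra.
rewrite leNgt; apply/negP => Ft.
have ltM : sup E < M.
  by rewrite lt_neqAle lM andbT; apply: contraTneq Ft => ->; rewrite -leNgt.
have [del0 Kdel] := small _ _ Ft.
pose e := Num.min (sup E + (t - F (sup E)) / (K + 1)) M.
have lt_e : sup E < e by rewrite lt_min ltM andbT; lra.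
have le_del : e - sup E <= (t - F (sup E)) / (K + 1) by rewrite lerBlDl ge_min lexx.
suff /le_sup : E e by lra.
split; first lra; split; first by rewrite ge_min lexx orbT.
have := Flip (sup E) e l0 (ltW lt_e).
have : K * (e - sup E) <= K * ((t - F (sup E)) / (K + 1)) by apply: ler_wpM2l.
lra.
Qed.
End RealFacts.

Lemma sorted_ltn_count_le (R : realType) (s : seq R) m t : sorted <=%R s ->
  (m < count (<= t) s)%N = (m < size s)%N && (nth 0 s m <= t).
Proof.
elim: s m => [|a s IHs] m //= s_sorted.
have {}IHs := IHs _ (path_sorted s_sorted).
have a_le : all (>= a) s by apply: order_path_min s_sorted; exact: le_trans.
have [at_|ta] := leP a t; first by case: m => [|m] /=; rewrite ?at_ // add1n ltnS IHs.
have -> : count (<= t) s = 0%N.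
  apply/eqP; rewrite -leqn0 leqNgt -has_count; apply/hasPn => y /(allP a_le) ay.
  by rewrite -ltNge (lt_le_trans ta).
case: m => [|m] /=; first by rewrite leNgt ta.
rewrite ltnS; have [ms|//] := ltnP m (size s); apply/esym/negbTE; rewrite -ltNge.
exact: lt_le_trans ta (allP a_le _ (mem_nth 0 ms)).
Qed.

Lemma card_set_count (T : finType) (P : pred T) : #|[set j | P j]| = count P (enum T).
Proof. by rewrite enumT cardsE cardE /enum_mem size_filter. Qed.

Lemma sum_count_fibers (U : Type) (T : finType) (f : U -> T) (s : seq U) :
  (\sum_(i : T) count (fun u => f u == i) s)%N = size s.
Proof.
elim: s => [|a s IHs] /=; first by rewrite big1.
by rewrite big_split /= IHs (bigD1 (f a)) //= eqxx big1 // => i; rewrite eq_sym => /negbTE ->.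
Qed.

(* Depths are clamped at 0 so that the strategies below are also defined on
   configurations that no hider can produce. *)
Definition depths (R : realType) (n d : nat) (x : acfg R n d) (i : 'I_n) : seq R :=
  sort <=%R [seq Num.max 0 (x j).2 | j <- enum 'I_d & (x j).1 == i].

Definition mplace (R : realType) (n d : nat) (x : acfg R n d) : mplacement n :=
  fun i => size (depths x i).

Notation avail x := (m_avail (mplace x)).

Section TreasureDepths.
Variables (R : realType) (n d : nat) (i0 : 'I_n).
Implicit Types (x : acfg R n d) (h : seq 'I_n) (S : {set 'I_n}).

Definition depth x i m : R := nth 0 (depths x i) m.

Definition found_depth x i m : R := if m is m'.+1 then depth x i m' else 0.

Definition gap x h i : R :=
  depth x i (count_mem i h) - found_depth x i (count_mem i h).

(* The selected doors whose next treasure simultaneous digging reaches first. *)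
Definition nearest x h S : {set 'I_n} :=
  [set j in S | avail x h j &&
     [forall i in S, avail x h i ==> (gap x h j <= gap x h i)]].

Definition nearest_resp x : mresp n := fun h S => odflt i0 [pick j in nearest x h S].

Lemma depths_sorted x i : sorted <=%R (depths x i).
Proof. exact/sort_sorted/le_total. Qed.

Lemma ltn_count_depths x i m t :
  (m < count (<= t) (depths x i))%N = (m < mplace x i)%N && (depth x i m <= t).
Proof. exact/sorted_ltn_count_le/depths_sorted. Qed.

Lemma count_depths x i t : 0 <= t ->
  count (<= t) (depths x i) = #|[set j | ((x j).1 == i) && ((x j).2 <= t)]|.
Proof.
move=> t0; rewrite count_sort count_map count_filter card_set_count.
by apply: eq_count => j /=; rewrite ge_max t0 andbC.
Qed.

Lemma sum_mplace x : (\sum_i mplace x i)%N = d.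
Proof.
under eq_bigr => i _ do rewrite /mplace size_sort size_map size_filter.
by rewrite sum_count_fibers size_enum_ord.
Qed.

Lemma depth_ge0 x i m : 0 <= depth x i m.
Proof.
rewrite /depth; have [lt_m|] := ltnP m (size (depths x i)); last by move/(nth_default 0) ->.
by move: (mem_nth 0 lt_m); rewrite mem_sort => /mapP [j _ ->]; rewrite le_max lexx.
Qed.

Lemma depth_le x i m m' : (m <= m')%N -> (m' < mplace x i)%N ->
  depth x i m <= depth x i m'.
Proof.
move=> le_m lt_m'; apply: (sorted_leq_nth le_trans lexx 0 (depths_sorted x i)) => //.
by rewrite inE (leq_ltn_trans le_m lt_m').
Qed.

Lemma found_depth_ge0 x i m : 0 <= found_depth x i m.
Proof. by case: m => [|m] //=; exact: depth_ge0. Qed.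

Lemma found_depth_le_depth x i m : (m < mplace x i)%N ->
  found_depth x i m <= depth x i m.
Proof. by case: m => [|m] /= lt_m; [exact: depth_ge0 | exact: depth_le]. Qed.

Lemma gap_ge0 x h i : avail x h i -> 0 <= gap x h i.
Proof. by move=> ?; rewrite subr_ge0 found_depth_le_depth. Qed.

Lemma in_nearest x h S j : (j \in nearest x h S) =
  [&& j \in S, avail x h j & [forall i in S, avail x h i ==> (gap x h j <= gap x h i)]].
Proof. by rewrite inE. Qed.

Lemma nearest_gap x h S j j' : j \in nearest x h S -> j' \in nearest x h S ->
  gap x h j = gap x h j'.
Proof.
rewrite !in_nearest => /and3P [jS ja /forall_inP min_j] /and3P [j'S j'a /forall_inP min_j'].
by apply/eqP; rewrite eq_le (implyP (min_j _ j'S)) ?(implyP (min_j' _ jS)).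
Qed.

Lemma nearest_respP x h S : [exists j in S, avail x h j] ->
  nearest_resp x h S \in nearest x h S.
Proof.
case/exists_inP => j jS ja.
have [j' /andP [j'S j'a] min_j'] := @arg_minP _ _ _ j [pred i | (i \in S) && avail x h i]
  (gap x h) (introT andP (conj jS ja)).
rewrite /nearest_resp; case: pickP => [//|/(_ j')]; rewrite in_nearest j'S j'a /=.
by move/negbT/negP; case; apply/forall_inP => i iS; apply/implyP => ia; apply: min_j'; rewrite /= iS.
Qed.

Lemma mhider_ok_nearest x : mhider_ok d (mplace x) (nearest_resp x).
Proof.
split=> [|h S /nearest_respP]; first exact: sum_mplace.
by rewrite in_nearest => /and3P [-> -> _].
Qed.

Lemma treasure_le_last_depth x j :
  (x j).2 <= found_depth x (x j).1 (mplace x (x j).1).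
Proof.
set i := (x j).1; set y := Num.max 0 (x j).2.
have y_in : y \in depths x i.
  by rewrite mem_sort; apply: map_f; rewrite mem_filter eqxx mem_enum.
have := y_in; rewrite -index_mem -/(mplace x i).
case E: (mplace x i) => [//|m] /=; rewrite ltnS => le_y.
apply: le_trans (_ : y <= _); first by rewrite le_max lexx orbT.
by rewrite -{1}(nth_index 0 y_in); apply: depth_le; rewrite // E.
Qed.

Lemma last_depth_le_hole x hh i : ahider_ok hh x ->
  found_depth x i (mplace x i) <= hh i.
Proof.
case=> hh0 [_ x_in]; case E: (mplace x i) => [//|m] /=; rewrite /depth.
have : (m < size (depths x i))%N by rewrite -/(mplace x i) E.
move/(mem_nth 0); rewrite mem_sort => /mapP [j]; rewrite mem_filter => /andP [/eqP <- _] ->.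
by rewrite ge_max hh0; case/andP: (x_in j).
Qed.

End TreasureDepths.

Lemma count_rcons (T : Type) (p : pred T) s x : count p (rcons s x) = (count p s + p x)%N.
Proof. by rewrite -cats1 count_cat /= addn0. Qed.

Lemma option_min_cases (R : realType) (u v : option R) : u = None /\ v = None \/
  exists e, [/\ u = Some e \/ v = Some e, forall g, u = Some g -> e <= g &
                forall g, v = Some g -> e <= g].
Proof.
case: u v => [u|] [v|]; [right | right | right | by left].
- have [uv|/ltW vu] := leP u v; [exists u | exists v].
    by split=> [|g [<-]|g [<-]]; [left | |].
  by split=> [|g [<-]|g [<-]]; [right | |].
- by exists u; split=> [|g [<-]|//]; [left |].
- by exists v; split=> [|//|g [<-]]; [right |].
Qed.

Section LevelDigging.
Variables (R : realType) (n d : nat) (i0 : 'I_n) (s : mstrat n).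
Implicit Types (x a b : acfg R n d) (h : seq 'I_n).

(* The door-game history and the depth dug so far at each place. *)
Definition dstate := (seq 'I_n * ('I_n -> R))%type.
Implicit Types (st : dstate).

(* The depths dug when the current round has reached level L.  An empty
   selection loses the door game; digging at i0 then just spends the budget. *)
Definition dig x st (L : R) : 'I_n -> R := fun i =>
  if s st.1 == finset.set0 then st.2 i + (if i == i0 then L else 0)
  else if i \in s st.1 then Num.max (st.2 i) (found_depth x i (count_mem i st.1) + L)
  else st.2 i.

Definition round_door x st : 'I_n := nearest_resp i0 x st.1 (s st.1).

Definition round_gap x st : option R :=
  if [exists j in s st.1, avail x st.1 j] then Some (gap x st.1 (round_door x st))
  else None.

Definition next_state x st (g : R) : dstate :=
  (rcons st.1 (round_door x st), dig x st g).

(* Simulation of at most f rounds, at level l counted from the start of the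
   current round. *)
Fixpoint profile x f st (l : R) : 'I_n -> R :=
  if f is f'.+1 then
    if round_gap x st is Some g then
      if l < g then dig x st l else profile x f' (next_state x st g) (l - g)
    else dig x st l
  else dig x st l.

Definition dstate_ok x st :=
  (forall i, found_depth x i (count_mem i st.1) <= st.2 i) /\
  (forall i, avail x st.1 i -> st.2 i <= depth x i (count_mem i st.1)).

Lemma dig_mono x st L1 L2 i : 0 <= L1 -> L1 <= L2 ->
  dig x st L1 i <= dig x st L2 i <= dig x st L1 i + (L2 - L1).
Proof.
move=> L1_ge0 le_L; rewrite /dig; case: ifP => _; first by case: ifP => _; apply/andP; lra.
case: ifP => _; last by apply/andP; lra.
set c := st.2 i; set p := found_depth _ _ _.
have c_le : c <= Num.max c (p + L1) by rewrite le_max lexx.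
have p_le : p + L1 <= Num.max c (p + L1) by rewrite le_max lexx orbT.
rewrite !ge_max !le_max lexx lerD2l le_L orbT /=.
by apply/andP; split; lra.
Qed.

Lemma dig_ge x st L i : 0 <= L -> st.2 i <= dig x st L i.
Proof.
move=> L0; rewrite /dig; case: ifP => _; first by case: ifP => _; lra.
by case: ifP => _; rewrite ?le_max ?lexx.
Qed.

Lemma dig0 x st : dstate_ok x st -> dig x st 0 = st.2.
Proof.
case=> found_le _; apply/funext => i; rewrite /dig; case: ifP => _.
  by case: ifP => _; rewrite addr0.
by case: ifP => // _; rewrite addr0; apply/max_idPl.
Qed.

Lemma round_gapP x st g : round_gap x st = Some g ->
  [/\ round_door x st \in nearest x st.1 (s st.1), s st.1 != finset.set0 &
      g = gap x st.1 (round_door x st)].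
Proof.
rewrite /round_gap; case: ifP => // ex_avail [<-].
have door_in := nearest_respP i0 ex_avail; split => //.
by apply/set0Pn; exists (round_door x st); move: door_in; rewrite in_nearest => /andP [].
Qed.

Lemma round_gap_ge0 x st g : round_gap x st = Some g -> 0 <= g.
Proof. by case/round_gapP; rewrite in_nearest => /and3P [_ ? _] _ ->; exact: gap_ge0. Qed.

Lemma round_gap_le x st g j : round_gap x st = Some g ->
  j \in s st.1 -> avail x st.1 j -> g <= gap x st.1 j.
Proof.
case/round_gapP => /[!in_nearest] /and3P [_ _ /forall_inP door_min] _ -> jS.
exact/implyP/door_min.
Qed.

Lemma dig_le_depth x st g i : dstate_ok x st -> round_gap x st = Some g ->
  avail x st.1 i -> dig x st g i <= depth x i (count_mem i st.1).
Proof.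
move=> [_ dug_le] g_end ia; have [_ S0 _] := round_gapP g_end.
rewrite /dig (negbTE S0); case: ifP => iS; last exact: dug_le.
by rewrite ge_max dug_le //= -lerBrDl; apply: round_gap_le.
Qed.

Lemma dig_nearest x st g j : dstate_ok x st -> round_gap x st = Some g ->
  j \in nearest x st.1 (s st.1) -> dig x st g j = depth x j (count_mem j st.1).
Proof.
move=> st_ok g_end j_near; have := j_near; rewrite in_nearest => /and3P [jS ja _].
apply/eqP; rewrite eq_le dig_le_depth //.
case/round_gapP: (g_end) => door_near S0 ->; rewrite -(nearest_gap j_near door_near).
by rewrite /dig (negbTE S0) jS le_max /gap addrC subrK lexx orbT.
Qed.

Lemma dstate_ok_next x st g : dstate_ok x st -> round_gap x st = Some g ->
  dstate_ok x (next_state x st g).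
Proof.
move=> st_ok g_end; have [found_le _] := st_ok.
have g0 := round_gap_ge0 g_end; set j := round_door x st.
have j_near : j \in nearest x st.1 (s st.1) by case/round_gapP: g_end.
have ja : avail x st.1 j by move: j_near; rewrite in_nearest => /and3P [].
split=> i /=; rewrite /m_avail !count_rcons /= -/j.
  have [<-|ji] := eqVneq j i; rewrite ?addn1 ?addn0 /=; first by rewrite (dig_nearest st_ok g_end j_near).
  exact: le_trans (found_le i) (dig_ge _ _ _ g0).
have [<-|ji] := eqVneq j i; rewrite ?addn1 ?addn0 => lt_i; last exact: dig_le_depth.
by rewrite (dig_nearest st_ok g_end j_near); apply: depth_le.
Qed.

Lemma profile0 x f st : dstate_ok x st -> profile x f st 0 = st.2.
Proof.
elim: f st => [|f IHf] st st_ok /=; first exact: dig0.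
case E: (round_gap x st) => [g|]; last exact: dig0.
case: ltP => [_|g_le0]; first exact: dig0.
have g0 : g = 0 by apply/eqP; rewrite eq_le g_le0 (round_gap_ge0 E).
subst g; rewrite subrr IHf; first exact: dig0.
exact: dstate_ok_next.
Qed.

Lemma profile_next x f st g l : round_gap x st = Some g -> g <= l ->
  profile x f.+1 st l = profile x f (next_state x st g) (l - g).
Proof. by move=> /= -> g_le; rewrite ltNge g_le. Qed.

Lemma profile_in_round x f st l : dstate_ok x st -> 0 <= l ->
  (forall g, round_gap x st = Some g -> l <= g) -> profile x f st l = dig x st l.
Proof.
case: f => [//|f] st_ok l0 l_le /=; case E: (round_gap x st) => [g|] //.
case: ltP => // g_le; have lg : l = g by apply/eqP; rewrite eq_le g_le l_le.
by rewrite lg subrr profile0 //; apply: dstate_ok_next.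
Qed.

Lemma profile_mono x f st l1 l2 i : dstate_ok x st -> 0 <= l1 -> l1 <= l2 ->
  profile x f st l1 i <= profile x f st l2 i <= profile x f st l1 i + (l2 - l1).
Proof.
elim: f st l1 l2 => [|f IHf] st l1 l2 st_ok l1_ge0 le_l /=; first exact: dig_mono.
case E: (round_gap x st) => [g|]; last exact: dig_mono.
have g0 := round_gap_ge0 E; have next_ok := dstate_ok_next st_ok E.
case: (ltP l1 g) => [lt1|le1]; case: (ltP l2 g) => [lt2|le2].
- exact: dig_mono.
- have /andP [d1 d2] := dig_mono x st i l1_ge0 (ltW lt1).
  have := IHf _ 0 (l2 - g) next_ok (lexx 0); rewrite subr_ge0 profile0 //.
  rewrite [(next_state _ _ _).2]/= subr0 => /(_ le2) /andP [p1 p2].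
  by apply/andP; split; lra.
- by have := lt_le_trans lt2 (le_trans le1 le_l); rewrite ltxx.
- have := IHf _ (l1 - g) (l2 - g) next_ok; rewrite subr_ge0 lerB // => /(_ le1 isT).
  by have -> : l2 - g - (l1 - g) = l2 - l1 by ring.
Qed.

Definition obs x (Q : 'I_n -> R) i : nat := count (<= Q i) (depths x i).

Definition same_found a b h :=
  forall i, found_depth a i (count_mem i h) = found_depth b i (count_mem i h).

Lemma same_foundC a b h : same_found a b h -> same_found b a h.
Proof. by move=> ab i; rewrite ab. Qed.

Lemma dig_same_found a b st L : same_found a b st.1 -> dig a st L = dig b st L.
Proof. by move=> ab; apply/funext => i; rewrite /dig ab. Qed.

Lemma round_gap_some x st : [exists j in s st.1, avail x st.1 j] ->
  round_gap x st = Some (gap x st.1 (round_door x st)).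
Proof. by rewrite /round_gap => ->. Qed.

Lemma obs_nearest a b st e j : dstate_ok b st -> same_found a b st.1 ->
  round_gap b st = Some e -> j \in nearest b st.1 (s st.1) ->
  obs a (dig b st e) =1 obs b (dig b st e) -> avail a st.1 j /\ gap a st.1 j <= e.
Proof.
move=> b_ok ab e_end j_near same_obs.
have := same_obs j; rewrite /obs (dig_nearest b_ok e_end j_near) => obs_j.
have : (count_mem j st.1 < obs b (dig b st e) j)%N.
  rewrite /obs (dig_nearest b_ok e_end j_near) ltn_count_depths lexx andbT.
  by move: j_near; rewrite in_nearest => /and3P [].
rewrite /obs (dig_nearest b_ok e_end j_near) -obs_j ltn_count_depths => /andP [ja le_depth].
split=> //; case/round_gapP: e_end => door_near _ ->.
by rewrite -(nearest_gap j_near door_near) /gap ab lerD2r.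
Qed.

Lemma nearest_obs_sub a b st e : dstate_ok b st -> same_found a b st.1 ->
  round_gap a st = Some e -> round_gap b st = Some e ->
  obs a (dig b st e) =1 obs b (dig b st e) ->
  {subset nearest b st.1 (s st.1) <= nearest a st.1 (s st.1)}.
Proof.
move=> b_ok ab ea eb same_obs j j_near.
have [ja gap_j] := obs_nearest b_ok ab eb j_near same_obs.
move: j_near; rewrite !in_nearest => /and3P [jS _ _]; rewrite jS ja /=.
by apply/forall_inP => i iS; apply/implyP => ia; apply: le_trans gap_j (round_gap_le ea iS ia).
Qed.

Lemma round_sync a b st e : dstate_ok a st -> dstate_ok b st -> same_found a b st.1 ->
  round_gap b st = Some e -> (forall g, round_gap a st = Some g -> e <= g) ->
  obs a (dig b st e) =1 obs b (dig b st e) ->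
  [/\ round_gap a st = Some e, next_state a st e = next_state b st e &
      same_found a b (next_state b st e).1].
Proof.
move=> a_ok b_ok ab eb e_le same_obs.
set j := round_door b st; have [j_near _ e_gap] := round_gapP eb.
have jS : j \in s st.1 by move: j_near; rewrite in_nearest => /andP [].
have [ja gap_le] := obs_nearest b_ok ab eb j_near same_obs.
have ea : round_gap a st = Some e.
  have ga := round_gap_some (introT exists_inP (ex_intro2 _ _ j jS ja)).
  rewrite ga; congr Some; apply/eqP; rewrite eq_le (e_le _ ga) andbT.
  exact: le_trans (round_gap_le ga jS ja) gap_le.
have same_obs' : obs b (dig a st e) =1 obs a (dig a st e).
  by move=> i; rewrite (dig_same_found _ ab) same_obs.
have same_near : nearest a st.1 (s st.1) = nearest b st.1 (s st.1).
  apply/setP => i; apply/idP/idP.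
    by apply: (nearest_obs_sub a_ok (same_foundC ab) eb ea same_obs').
  by apply: (nearest_obs_sub b_ok ab ea eb same_obs).
have same_door : round_door a st = j by rewrite /round_door /nearest_resp same_near.
have same_depth : depth a j (count_mem j st.1) = depth b j (count_mem j st.1).
  by case/round_gapP: ea => _ _; rewrite same_door e_gap /gap ab => /addIr.
split=> //; first by rewrite /next_state same_door (dig_same_found _ ab).
move=> i /=; rewrite !count_rcons /= -/j.
by have [<-|ji] := eqVneq j i; rewrite ?addn1 ?addn0 //= ab.
Qed.

Lemma round_sync_sym a b st e : dstate_ok a st -> dstate_ok b st -> same_found a b st.1 ->
  round_gap a st = Some e \/ round_gap b st = Some e ->
  (forall g, round_gap a st = Some g -> e <= g) ->
  (forall g, round_gap b st = Some g -> e <= g) ->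
  obs a (dig a st e) =1 obs b (dig a st e) ->
  [/\ round_gap a st = Some e, round_gap b st = Some e,
      next_state a st e = next_state b st e & same_found a b (next_state a st e).1].
Proof.
move=> a_ok b_ok ab [ea|eb] le_a le_b same_obs.
  have same_obs' : obs b (dig a st e) =1 obs a (dig a st e) by move=> i; rewrite same_obs.
  have [eb next_eq ba] := round_sync b_ok a_ok (same_foundC ab) ea le_b same_obs'.
  by split=> //; apply: same_foundC.
rewrite (dig_same_found _ ab) in same_obs.
by have [ea next_eq ab'] := round_sync a_ok b_ok ab eb le_a same_obs; rewrite next_eq.
Qed.

Lemma profile_nonanticipative a b f st l :
  dstate_ok a st -> dstate_ok b st -> same_found a b st.1 -> 0 <= l ->
  (forall mu, 0 <= mu <= l -> profile a f st mu = profile b f st mu ->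
     obs a (profile a f st mu) =1 obs b (profile a f st mu)) ->
  profile a f st l = profile b f st l.
Proof.
elim: f st l => [|f IHf] st l a_ok b_ok ab l0 obs_eq; first exact: dig_same_found.
have [[no_a no_b]|[e [e_end le_a le_b]]] := option_min_cases (round_gap a st) (round_gap b st).
  by rewrite /= no_a no_b (dig_same_found _ ab).
have [lt_le|le_el] := ltP l e.
  have in_round_a g : round_gap a st = Some g -> l <= g by move/le_a; lra.
  have in_round_b g : round_gap b st = Some g -> l <= g by move/le_b; lra.
  by rewrite !profile_in_round // (dig_same_found _ ab).
have e0 : 0 <= e by case: e_end => /round_gap_ge0.
have at_e x : dstate_ok x st -> (forall g, round_gap x st = Some g -> e <= g) ->
    profile x f.+1 st e = dig x st e by move=> ? ?; apply: profile_in_round.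
have same_obs : obs a (dig a st e) =1 obs b (dig a st e).
  rewrite -at_e //; apply: obs_eq; first by rewrite e0 le_el.
  by rewrite !at_e // (dig_same_found _ ab).
have [ea eb next_eq ab'] := round_sync_sym a_ok b_ok ab e_end le_a le_b same_obs.
have next_ok := dstate_ok_next a_ok ea.
rewrite (profile_next _ ea le_el) (profile_next _ eb le_el) -next_eq.
apply: IHf => //; [by rewrite next_eq; apply: dstate_ok_next | lra |].
move=> mu /andP [mu0 mu_le]; have le_e : e <= mu + e by lra.
rewrite -(addrK e mu) -(profile_next _ ea le_e) next_eq -(profile_next _ eb le_e).
by apply: obs_eq; lra.
Qed.

Lemma dig_sum_ge x st L : dstate_ok x st -> 0 <= L -> L <= \sum_i dig x st L i.
Proof.
case=> found_le _ L0.
have dug_ge0 i : 0 <= st.2 i by apply: le_trans (found_le i); apply: found_depth_ge0.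
have rest_ge0 j : 0 <= \sum_(i | i != j) dig x st L i.
  by apply: sumr_ge0 => i _; apply: le_trans (dig_ge _ _ _ L0).
have [S0|/set0Pn [j jS]] := eqVneq (s st.1) finset.set0.
  rewrite (bigD1 i0) //= {1}/dig S0 !eqxx /=.
  by have := dug_ge0 i0; have := rest_ge0 i0; lra.
have S_ne : s st.1 != finset.set0 by apply/set0Pn; exists j.
have : L <= dig x st L j.
  by rewrite /dig (negbTE S_ne) jS le_max lerDr found_depth_ge0 orbT.
by rewrite (bigD1 j) //=; have := rest_ge0 j; lra.
Qed.

Lemma profile_sum_unbounded x f st t : dstate_ok x st ->
  exists2 l, 0 <= l & t <= \sum_i profile x f st l i.
Proof.
have last_round st' : dstate_ok x st' -> exists2 l, 0 <= l & t <= \sum_i dig x st' l i.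
  move=> st'_ok; have l0 : 0 <= Num.max 0 t by rewrite le_max lexx.
  exists (Num.max 0 t) => //; apply: le_trans (dig_sum_ge st'_ok l0).
  by rewrite le_max lexx orbT.
elim: f st => [|f IHf] st st_ok /=; first exact: last_round.
case E: (round_gap x st) => [g|]; last exact: last_round.
have [l l0 le_t] := IHf _ (dstate_ok_next st_ok E); have g0 := round_gap_ge0 E.
by exists (l + g); rewrite ?addr_ge0 // ltNge lerDr l0 /= addrK.
Qed.

Lemma dig_sum_le x st g k : dstate_ok x st -> 0 <= g -> (#|s st.1| <= k)%N ->
  s st.1 != finset.set0 -> \sum_i dig x st g i <= \sum_i st.2 i + k%:R * g.
Proof.
case=> found_le _ g0 S_le S_ne.
apply: (@le_trans _ _ (\sum_i (st.2 i + (if i \in s st.1 then g else 0)))).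
  apply: ler_sum => i _; rewrite /dig (negbTE S_ne); case: ifP => _; last by rewrite addr0.
  by rewrite ge_max lerDl g0 lerD2r found_le.
rewrite big_split /= -big_mkcond sumr_const lerD2l -[g *+ _]mulr_natl.
by apply: ler_wpM2r => //; rewrite ler_nat.
Qed.

Definition mstep x (o : option (seq 'I_n)) : option (seq 'I_n) :=
  if o is Some h then
    if [exists j in s h, avail x h j] then Some (rcons h (nearest_resp i0 x h (s h)))
    else None
  else None.

Lemma mplay_iter x m :
  mplay s (mplace x) (nearest_resp i0 x) m = iter m (mstep x) (Some [::]).
Proof. by elim: m => //= m ->. Qed.

Lemma iter_mstep_counts x m h : iter m (mstep x) (Some [::]) = Some h ->
  size h = m /\ forall i, (count_mem i h <= mplace x i)%N.
Proof.
elim: m h => [h [<-]//|m IHm h] /=.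
case: (iter m _ _) IHm => [h' /(_ h' erefl) [size_h' le_h']|//] /=.
case: ifP => // /(nearest_respP i0); rewrite in_nearest => /and3P [_ ja _] [<-].
split=> [|i]; first by rewrite size_rcons size_h'.
by rewrite count_rcons /=; case: eqP => [<-|_]; rewrite ?addn1 ?addn0.
Qed.

Lemma iter_mstep_None x f : iter f (mstep x) None = None.
Proof. by elim: f => //= f ->. Qed.

Lemma found_depth_next x st g : round_gap x st = Some g ->
  \sum_i (found_depth x i (count_mem i (next_state x st g).1) -
          found_depth x i (count_mem i st.1)) = g.
Proof.
case/round_gapP => _ _ ->; set j := round_door x st.
rewrite (bigD1 j) //= big1 => [|i ji]; first by rewrite count_rcons /= eqxx addn1 addr0 /gap.
by rewrite count_rcons /= eq_sym (negbTE ji) addn0 subrr.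
Qed.

Lemma profile_after_rounds x f st h k : mstrat_ok k s -> dstate_ok x st ->
  iter f (mstep x) (Some st.1) = Some h ->
  exists2 L, 0 <= L &
    [/\ forall i, found_depth x i (count_mem i h) <= profile x f st L i,
        \sum_i profile x f st L i <= \sum_i st.2 i + k%:R * L &
        L = \sum_i (found_depth x i (count_mem i h) - found_depth x i (count_mem i st.1))].
Proof.
move=> s_ok; elim: f st => [|f IHf] st st_ok.
  case=> <-; exists 0 => //=; rewrite dig0 // mulr0 addr0; split=> //; first by case: st_ok.
  by rewrite big1 // => i _; rewrite subrr.
rewrite iterSr [mstep x _]/=; case: ifP => [ex_avail|_]; last by rewrite iter_mstep_None.
have E := round_gap_some ex_avail; set g := gap _ _ _ in E.
have [_ S_ne _] := round_gapP E; have g0 := round_gap_ge0 E.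
move/(IHf (next_state x st g) (dstate_ok_next st_ok E)) => [L L0 [found_le cost_le L_eq]].
exists (L + g); first by rewrite addr_ge0.
rewrite (profile_next _ E) ?lerDr // addrK; split=> //.
  apply: le_trans cost_le _; have := dig_sum_le st_ok g0 (s_ok st.1) S_ne.
  by rewrite [(next_state _ _ _).2]/= [k%:R * (L + g)]mulrDr; lra.
by rewrite L_eq -(found_depth_next E) -big_split /=; apply: eq_bigr => i _; rewrite addrA subrK.
Qed.

Lemma iter_mstep_full x h : iter d (mstep x) (Some [::]) = Some h ->
  forall i, count_mem i h = mplace x i.
Proof.
move=> /iter_mstep_counts [size_h le_h].
have : (\sum_i (mplace x i - count_mem i h) == 0)%N.
  by rewrite (sumnB _ (fun i _ => le_h i)) sum_mplace (sum_count_fibers id) size_h subnn.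
rewrite sum_nat_eq0 => /forallP eq_h i.
by apply/eqP; rewrite eqn_leq le_h -subn_eq0; exact: (implyP (eq_h i)).
Qed.
End LevelDigging.

Section DiggingStrategy.
Variables (R : realType) (n d : nat) (i0 : 'I_n) (s : mstrat n).
Implicit Types (x y : acfg R n d).

Definition dstate0 : dstate R n := ([::], fun _ => 0).

Lemma dstate_ok0 x : dstate_ok x dstate0.
Proof. by split=> i //= _; apply: depth_ge0. Qed.

Definition level_dig x l : 'I_n -> R := profile i0 s x d dstate0 l.

Definition level_cost x l : R := \sum_i level_dig x l i.

Lemma level_dig0 x : level_dig x 0 = fun=> 0.
Proof. exact/profile0/dstate_ok0. Qed.

Lemma level_dig_mono x l1 l2 i : 0 <= l1 -> l1 <= l2 ->
  level_dig x l1 i <= level_dig x l2 i <= level_dig x l1 i + (l2 - l1).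
Proof. exact/profile_mono/dstate_ok0. Qed.

Lemma level_dig_ge0 x l i : 0 <= l -> 0 <= level_dig x l i.
Proof.
by move=> l0; have /andP [+ _] := level_dig_mono x i (lexx 0) l0; rewrite level_dig0.
Qed.

Lemma level_cost0 x : level_cost x 0 = 0.
Proof. by rewrite /level_cost level_dig0 big1. Qed.

Lemma level_cost_lipschitz x l1 l2 : 0 <= l1 -> l1 <= l2 ->
  level_cost x l2 <= level_cost x l1 + n%:R * (l2 - l1).
Proof.
move=> l1_ge0 le_l; rewrite mulr_natl -[n in _ *+ n]card_ord -sumr_const -big_split /=.
by apply: ler_sum => i _; case/andP: (level_dig_mono x i l1_ge0 le_l).
Qed.

Lemma level_cost_surj x t : 0 <= t -> exists2 l, 0 <= l & level_cost x l = t.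
Proof.
move=> t0; have [M M0 t_le] := profile_sum_unbounded i0 s d t (dstate_ok0 x).
apply: (upper_lipschitz_ivt (K := n%:R) (M := M)) => //; first exact: level_cost_lipschitz.
by rewrite level_cost0.
Qed.

Lemma level_dig_cost x l1 l2 : 0 <= l1 -> 0 <= l2 ->
  level_cost x l1 = level_cost x l2 -> level_dig x l1 = level_dig x l2.
Proof.
wlog le_l : l1 l2 / l1 <= l2.
  move=> hwlog l1_ge0 l2_ge0 cost_eq; have [le12|/ltW le21] := leP l1 l2.
    exact: hwlog.
  exact/esym/hwlog.
move=> l1_ge0 _ cost_eq.
have incr_ge0 i : 0 <= level_dig x l2 i - level_dig x l1 i.
  by rewrite subr_ge0; case/andP: (level_dig_mono x i l1_ge0 le_l).
have incr0 : \sum_i (level_dig x l2 i - level_dig x l1 i) = 0.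
  by rewrite sumrB -/(level_cost x l2) -/(level_cost x l1) cost_eq subrr.
apply/funext => i; apply/esym/eqP; rewrite -subr_eq0; apply/eqP.
exact: (psumr_eq0P (fun i _ => incr_ge0 i) incr0).
Qed.

Lemma level_dig_cost_le x l1 l2 i : 0 <= l1 -> 0 <= l2 ->
  level_cost x l1 <= level_cost x l2 -> level_dig x l1 i <= level_dig x l2 i.
Proof.
move=> l1_ge0 l2_ge0 le_cost; have [le_l|/ltW le_l] := leP l1 l2.
  by case/andP: (level_dig_mono x i l1_ge0 le_l).
have cost_eq : level_cost x l1 = level_cost x l2.
  apply/eqP; rewrite eq_le le_cost /=.
  by apply: ler_sum => j _; case/andP: (level_dig_mono x j l2_ge0 le_l).
by rewrite (level_dig_cost l1_ge0 l2_ge0 cost_eq).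
Qed.

(* All levels of cost t give the same depths, by level_dig_cost. *)
Definition level_of x t : R := xget 0 [set l | 0 <= l /\ level_cost x l = t].

Lemma level_ofP x t : 0 <= t -> 0 <= level_of x t /\ level_cost x (level_of x t) = t.
Proof.
move=> t0; apply: (xgetPex 0 (P := [set l | 0 <= l /\ level_cost x l = t])).
by have [l] := level_cost_surj x t0; exists l.
Qed.

Definition dig_strat : astrat R n d := fun x t => level_dig x (level_of x t).

Lemma dig_strat_level x l : 0 <= l -> dig_strat x (level_cost x l) = level_dig x l.
Proof.
move=> l0; have cost0 : 0 <= level_cost x l by apply: sumr_ge0 => i _; apply: level_dig_ge0.
by have [lt0 cost_eq] := level_ofP x cost0; apply: level_dig_cost.
Qed.

Lemma dig_strat0 x : dig_strat x 0 = fun=> 0.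
Proof. by rewrite -{1}(level_cost0 x) dig_strat_level // level_dig0. Qed.

Lemma dig_strat_mono x t t' i : 0 <= t -> t <= t' -> dig_strat x t i <= dig_strat x t' i.
Proof.
move=> t0 le_t; have t'0 := le_trans t0 le_t.
have [l0 cost_l] := level_ofP x t0; have [l'0 cost_l'] := level_ofP x t'0.
by apply: level_dig_cost_le; rewrite ?cost_l ?cost_l'.
Qed.

Lemma dig_strat_sum x t : 0 <= t -> \sum_i dig_strat x t i = t.
Proof. by case/(level_ofP x). Qed.

Lemma aobs_dig_strat x t i : 0 <= t -> aobs dig_strat x t i = obs x (dig_strat x t) i.
Proof.
move=> t0; have [l0 _] := level_ofP x t0.
rewrite /obs count_depths ?level_dig_ge0 //; apply: eq_card => j.
by rewrite inE; apply/idP/idP => [/set_mem|?]; last exact/mem_set.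
Qed.

Lemma dig_strat_nonanticipative x y t :
  (forall t', 0 <= t' <= t -> aobs dig_strat x t' = aobs dig_strat y t') ->
  forall t', 0 <= t' <= t -> dig_strat x t' = dig_strat y t'.
Proof.
move=> same_aobs t' /andP [t'0 le_t']; have [l'0 cost_l'] := level_ofP x t'0.
have same_dig : level_dig x (level_of x t') = level_dig y (level_of x t').
  apply: (profile_nonanticipative (dstate_ok0 x) (dstate_ok0 y)) => //.
  move=> mu /andP [mu0 le_mu]; rewrite -/(level_dig x mu) -/(level_dig y mu) => dig_eq i.
  have cost_ge0 : 0 <= level_cost x mu by apply: sumr_ge0 => j _; apply: level_dig_ge0.
  have cost_le : level_cost x mu <= t.
    apply: le_trans le_t'; rewrite -cost_l'; apply: ler_sum => j _.
    by case/andP: (level_dig_mono x j mu0 le_mu).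
  have cost_eq : level_cost y mu = level_cost x mu by rewrite /level_cost -dig_eq.
  have /(congr1 (fun D => D i)) : aobs dig_strat x (level_cost x mu) = aobs dig_strat y (level_cost x mu).
    by apply: same_aobs; rewrite cost_ge0 cost_le.
  by rewrite /= !aobs_dig_strat // dig_strat_level // -cost_eq dig_strat_level // dig_eq.
have [l''0 cost_l''] := level_ofP y t'0.
rewrite /dig_strat same_dig; apply: level_dig_cost => //.
by rewrite cost_l'' -[RHS]cost_l' /level_cost same_dig.
Qed.

Lemma astrat_ok_dig_strat k : astrat_ok k dig_strat.
Proof.
split=> [x i|]; first by rewrite dig_strat0.
split=> [x i t t' t0 le_t _|]; first exact: dig_strat_mono.
split=> [x t /andP [t0 _]|x y t _]; first exact: dig_strat_sum.
exact: dig_strat_nonanticipative.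
Qed.

Lemma awins_dig_strat x hh k : mstrat_ok k s -> ahider_ok hh x ->
  mwins d s (mplace x) (nearest_resp i0 x) -> awins k dig_strat x.
Proof.
move=> s_ok x_ok; rewrite /mwins mplay_iter; case E: (iter _ _ _) => [h|] // _.
have full := iter_mstep_full E.
have [L L0 []] := profile_after_rounds s_ok (dstate_ok0 x) E.
rewrite -/(level_dig x L) -/(level_cost x L) big1 // add0r => found_le cost_le L_eq.
have L_le1 : L <= 1.
  case: (x_ok) => _ [hh_le1 _]; apply: le_trans hh_le1; rewrite L_eq; apply: ler_sum => i _.
  by rewrite full subr0; apply: last_depth_le_hole.
have k0 : 0 <= k%:R :> R by [].
have [lk0 cost_lk] := level_ofP x k0.
rewrite /awins; apply/forallP => j; apply: le_trans (treasure_le_last_depth x j) _.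
rewrite -full; apply: le_trans (found_le _) _; apply: level_dig_cost_le => //.
by rewrite cost_lk; apply: le_trans cost_le _; rewrite ler_piMr.
Qed.
End DiggingStrategy.

Section GameValues.
Variable R : realType.
Local Open Scope classical_set_scope.

Lemma mix_ok_map (T U : Type) (ok : T -> Prop) (ok' : U -> Prop) (F : T -> U)
    (mu : seq (R * T)) :
  (forall t, ok t -> ok' (F t)) -> mix_ok ok mu -> mix_ok ok' [seq (p.1, F p.2) | p <- mu].
Proof.
move=> okF [mu_ok mu_sum]; split; last by rewrite big_map.
by elim: mu mu_ok {mu_sum} => //= p mu IHmu [[p0 /okF ?] /IHmu].
Qed.

Lemma mix_winprob_le (T U : Type) (ok : T -> Prop) (F : T -> U) (b : T -> bool)
    (b' : U -> bool) (mu : seq (R * T)) :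
  (forall t, ok t -> b t -> b' (F t)) -> mix_ok ok mu ->
  \sum_(p <- mu) p.1 * (b p.2)%:R <= \sum_(p <- [seq (p.1, F p.2) | p <- mu]) p.1 * (b' p.2)%:R.
Proof.
move=> le_b [+ _]; rewrite big_map; elim: mu => [|p mu IHmu] /=; first by rewrite !big_nil.
case=> [[p0 p_ok] /IHmu]; rewrite !big_cons; apply: lerD; apply: ler_wpM2l => //.
by case: (b p.2) (le_b _ p_ok) => [->|] //= _; case: (b' _).
Qed.

Lemma mix_winprob_bounds (T : Type) (ok : T -> Prop) (b : T -> bool) (mu : seq (R * T)) :
  mix_ok ok mu -> 0 <= \sum_(p <- mu) p.1 * (b p.2)%:R <= 1.
Proof.
case=> mu_ok mu_sum.
suff : 0 <= \sum_(p <- mu) p.1 * (b p.2)%:R <= \sum_(p <- mu) p.1 by rewrite mu_sum.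
elim: mu mu_ok {mu_sum} => [|p mu IHmu] /=; first by rewrite !big_nil lexx.
case=> [[p0 _] /IHmu /andP [lb ub]]; rewrite !big_cons.
have : 0 <= p.1 * (b p.2)%:R <= p.1 by case: (b p.2); rewrite /= ?mulr1 ?mulr0 lexx p0.
by case/andP => ? ?; apply/andP; split; lra.
Qed.

Variables (n d k : nat).

Lemma v_M_le_v_A : (0 < n)%N ->
  (forall mu, mix_ok (@mstrat_ok n k) mu -> exists2 nu, mix_ok (@astrat_ok R n d k) nu &
     forall hh x, ahider_ok hh x ->
       exists c r, mhider_ok d c r /\ mwinprob d mu c r <= awinprob k nu x) ->
  v_M R n d k <= v_A R n d k.
Proof.
move=> n0 transfer; pose i0 : 'I_n := Ordinal n0.
pose hh0 (i : 'I_n) : R := (i == i0)%:R; pose x0 : acfg R n d := fun=> (i0, 0).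
have x0_ok : ahider_ok hh0 x0.
  split=> [i|]; first by rewrite /hh0; case: (i == i0).
  split=> [|j]; last by rewrite /= lexx ler01.
  by rewrite (bigD1 i0) //= /hh0 eqxx big1 ?addr0 // => i /negbTE ->.
pose IM (mu : seq (R * mstrat n)) : set R := [set w | exists c r, mhider_ok d c r /\ w = mwinprob d mu c r].
pose IA (nu : seq (R * astrat R n d)) : set R := [set w | exists hh (x : acfg R n d), ahider_ok hh x /\ w = awinprob k nu x].
have IM_lb mu : mix_ok (@mstrat_ok n k) mu -> has_lbound (IM mu).
  by move=> mu_ok; exists 0 => _ [c [r [_ ->]]]; case/andP: (mix_winprob_bounds (fun t => mwins d t c r) mu_ok).
have IA_x0 nu : IA nu (awinprob k nu x0) by exists hh0, x0.
have vA_ub : has_ubound [set v | exists nu, mix_ok (@astrat_ok R n d k) nu /\ v = inf (IA nu)].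
  exists 1 => _ [nu [nu_ok ->]]; apply: le_trans (ge_inf _ (IA_x0 nu)) _.
    by exists 0 => _ [hh [x [_ ->]]]; case/andP: (mix_winprob_bounds (awins k ^~ x) nu_ok).
  by case/andP: (mix_winprob_bounds (awins k ^~ x0) nu_ok).
have vM_ne : [set v | exists mu, mix_ok (@mstrat_ok n k) mu /\ v = inf (IM mu)] !=set0.
  have mu0_ok : mix_ok (@mstrat_ok n k) [:: (1, fun=> finset.set0)].
    by split; rewrite ?big_seq1 //=; split=> //; split=> [|h]; rewrite ?ler01 ?cards0.
  by exists (inf (IM [:: (1, fun=> finset.set0)])), [:: (1, fun=> finset.set0)].
apply: ge_sup => // _ [mu [mu_ok ->]]; have [nu nu_ok nu_ge] := transfer mu mu_ok.
apply: le_trans (ub_le_sup vA_ub (ex_intro _ nu (conj nu_ok erefl))).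
apply: lb_le_inf; first by exists (awinprob k nu x0).
move=> _ [hh [x [x_ok ->]]]; have [c [r [cr_ok le_w]]] := nu_ge hh x x_ok.
by apply: le_trans le_w; apply: (ge_inf (IM_lb mu mu_ok)); exists c, r.
Qed.
End GameValues.

Theorem mainTheorem3 (R : realType) (n d k : nat) :
  (0 < n)%N -> (0 < d)%N -> (0 < k)%N ->
  v_M R n d k <= v_A R n d k.
Proof.
move=> n0 _ _; apply: v_M_le_v_A => // mu mu_ok; pose i0 : 'I_n := Ordinal n0.
exists [seq (p.1, dig_strat i0 p.2) | p <- mu].
  by apply: mix_ok_map mu_ok => s _; apply: astrat_ok_dig_strat.
move=> hh x x_ok; exists (mplace x), (nearest_resp i0 x); split.
  exact: mhider_ok_nearest.
apply: (mix_winprob_le (b := fun s => mwins d s _ _) (b' := fun D => awins k D x) _ mu_ok).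
by move=> s s_ok; apply: awins_dig_strat s_ok x_ok.
Qed.
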